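(* Let $X$ be a set of $n$ elements and let $\mathcal{P}$ be a family of subsets of $X$. Let $d \geq 1$ and $\delta \geq 1$ be integers such that the VC-dimension of $\mathcal{P}$ is at most $d$ and $|\Delta(S,T)| \geq \delta$ for all distinct $S, T \in \mathcal{P}$. Assume that $s = \frac{4dn}{\delta}$ is an integer with $s \leq n$. Let $A'$ be a subset of $X$ of size $s-1$ chosen uniformly at random among all $(s-1)$-element subsets of $X$. Then $$|\mathcal{P}| \leq 2 \cdot \mathbf{E}\big[\,|\mathcal{P}_{|A'}|\,\big].$$
   Context: For sets $R, S$, $\Delta(R,S) = (R \setminus S) \cup (S \setminus R)$ denotes the symmetric difference. For $Y \subseteq X$, the projection (trace) of $\mathcal{P}$ on $Y$ is $\mathcal{P}_{|Y} = \{ S \cap Y : S \in \mathcal{P}\}$, and $|\mathcal{P}_{|Y}|$ is the number of distinct sets in it. The VC-dimension of $\mathcal{P}$ is the largest size of a set $Y \subseteq X$ with $\mathcal{P}_{|Y} = 2^Y$. *)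

From HB Require Import structures.
From mathcomp Require Import all_boot all_order all_algebra.
Set Implicit Arguments. Unset Strict Implicit. Unset Printing Implicit Defensive.
Import Order.TTheory GRing.Theory Num.Theory.

Definition symdiff (T : finType) (R S : {set T}) : {set T} :=
  (R :\: S) :|: (S :\: R).

Definition trace (T : finType) (P : {set {set T}}) (Y : {set T}) : {set {set T}} :=
  [set S :&: Y | S in P].

Definition shatters (T : finType) (P : {set {set T}}) (Y : {set T}) : bool :=
  trace P Y == powerset Y.

Definition VCdim_le (T : finType) (P : {set {set T}}) (d : nat) : Prop :=
  forall Y : {set T}, shatters P Y -> #|Y| <= d.

Definition E_uniform_ksubset (T : finType) (k : nat) (f : {set T} -> nat) : rat :=
  ((\sum_(A : {set T} | #|A| == k) f A)%:R / #|[set A : {set T} | #|A| == k]|%:R)%R.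

From mathcomp Require Import all_boot all_order all_algebra.
From mathcomp Require Import zify ring.
Set Implicit Arguments. Unset Strict Implicit. Unset Printing Implicit Defensive.
Import GRing.Theory Num.Theory.

(* Fix a set A of size s - 1 and group the members of P into classes according
   to their trace on A.  Two members of a class differ only outside A, hence in
   at least delta points, and counting the ordered pairs of a class C splits
   over the points x outside A as (#{S in C | x \notin S}) * (#{S in C | x \in S}).
   This gives delta (|C| - 1) <= 2 sum_(x \notin A) min(#{x \notin S}, #{x \in S}),
   and summing over the classes bounds delta (|P| - |P_|A|) by twice the total
   min-weight of the edges of the one-inclusion graph of P_|(A + x) in direction
   x.  Haussler's bound (a family of VC-dimension at most d has at most d |F|
   one-inclusion edges), applied to the level sets of the class sizes, bounds
   that weight summed over all directions by d |P|.  Each set B of size s is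
   A + x for exactly s pairs (A, x), so averaging over A gives
   delta (|P| - E |P_|A'|) <= 2 d |P| (n - s + 1) / s <= delta |P| / 2. *)

Definition separated (T : finType) (delta : nat) (C : {set {set T}}) :=
  forall S U, S \in C -> U \in C -> S != U -> delta <= #|symdiff S U|.

Lemma leq_sum_pred (I : finType) (p q : pred I) (F : I -> nat) :
  (forall i, p i -> q i) -> \sum_(i | p i) F i <= \sum_(i | q i) F i.
Proof. exact: (sub_le_big leqnn (fun m n => leq_addr n m)). Qed.

Lemma card_set_pred_sum (T : finType) (C : {set T}) (p : pred T) :
  #|[set S in C | p S]| = \sum_(S in C) p S.
Proof.
rewrite -sum1_card big_mkcond [RHS]big_mkcond /=.
by apply: eq_bigr => S _; rewrite inE; case: (S \in C); case: (p S).
Qed.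

Lemma card_set_pred_split (T : finType) (C : {set T}) (p : pred T) :
  #|[set S in C | p S]| + #|[set S in C | ~~ p S]| = #|C|.
Proof.
rewrite !card_set_pred_sum -big_split -sum1_card /=.
by apply: eq_bigr => S _; case: (p S).
Qed.

Lemma sum_ord_ltn K m : \sum_(t < K) (t < m) = minn K m.
Proof.
elim: K => [|K IH]; first by rewrite big_ord0 min0n.
by rewrite big_ord_recr /= IH; lia.
Qed.

Lemma minn_sum_ord K a b : a <= K -> b <= K ->
  minn a b = \sum_(t < K) ((t < a) && (t < b)).
Proof.
move=> aK bK; rewrite (eq_bigr (fun t : 'I_K => (t < minn a b) : nat)).
  by rewrite sum_ord_ltn; lia.
by move=> t _; rewrite leq_min.
Qed.

Lemma setD1_notin (T : finType) (A : {set T}) x : x \notin A -> A :\ x = A.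
Proof. by move=> xA; apply/setDidPl; rewrite disjoint_sym disjoints1. Qed.

Lemma setU1D1 (T : finType) (A : {set T}) x y : y != x -> y |: (A :\ x) = (y |: A) :\ x.
Proof.
by move=> yx; apply/setP => z; rewrite !inE; case: (eqVneq z y) => [->|] //=; rewrite yx.
Qed.

Section Shattering.
Variable T : finType.
Implicit Types (F G : {set {set T}}) (A Y : {set T}) (x y : T) (d : nat).

Lemma trace_sub_powerset F Y : trace F Y \subset powerset Y.
Proof. by apply/subsetP => _ /imsetP [S _ ->]; rewrite powersetE subsetIr. Qed.

Lemma shatters_subset G F Y : G \subset F -> shatters G Y -> shatters F Y.
Proof.
move=> GF /eqP hY; rewrite /shatters eqEsubset trace_sub_powerset -hY.
exact: imsetS.
Qed.

Lemma VCdim_le_subset G F d : G \subset F -> VCdim_le F d -> VCdim_le G d.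
Proof. by move=> GF hF Y /(shatters_subset GF) /hF. Qed.

Lemma trace_trace F A Y : trace (trace F A) Y = trace F (A :&: Y).
Proof. by rewrite /trace -imset_comp; apply: eq_imset => S /=; rewrite setIA. Qed.

Lemma shatters_trace F A Y : shatters (trace F A) Y -> shatters F Y.
Proof.
rewrite /shatters trace_trace => /eqP hY.
have : Y \in trace F (A :&: Y) by rewrite hY powersetE.
case/imsetP => S _ eY.
have YA : Y \subset A by rewrite {1}eY setICA subsetIl.
by rewrite -{1}(setIidPr YA) hY.
Qed.

Lemma VCdim_le_trace F A d : VCdim_le F d -> VCdim_le (trace F A) d.
Proof. by move=> hF Y /shatters_trace /hF. Qed.

Lemma deletion_trace F x : [set S :\ x | S in F] = trace F [set~ x].
Proof. by apply: eq_imset => S; rewrite setDE. Qed.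

(* The lower endpoints of the edges of the one-inclusion graph of [F] in
   direction [x]. *)
Definition edge_base F x := [set S in F | (x \notin S) && (x |: S \in F)].

Lemma shatters_edge_base F x Y :
  shatters (edge_base F x) Y -> x \notin Y /\ shatters F (x |: Y).
Proof.
move=> /eqP hY; split.
  have : Y \in trace (edge_base F x) Y by rewrite hY powersetE.
  case/imsetP => S; rewrite inE => /and3P [_ xS _] ->.
  by rewrite inE negb_and xS.
rewrite /shatters eqEsubset trace_sub_powerset /=.
apply/subsetP => Z; rewrite powersetE => ZxY.
have : Z :\ x \in trace (edge_base F x) Y by rewrite hY powersetE subDset.
case/imsetP => S; rewrite inE => /and3P [SF xS xSF] eZ.
apply/imsetP; case: (boolP (x \in Z)) => xZ.
  by exists (x |: S) => //; rewrite -setUIr -eZ setD1K.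
exists S => //; apply/setP => z; move/setP: eZ => /(_ z); rewrite !inE.
case: (eqVneq z x) => [->|_] /=; first by rewrite (negbTE xZ) (negbTE xS).
by move=> ->.
Qed.

Lemma VCdim_le_edge_base F x d : VCdim_le F d.+1 -> VCdim_le (edge_base F x) d.
Proof. by move=> hF Y /shatters_edge_base [xY /hF]; rewrite cardsU1 xY. Qed.

Lemma edge_base_VCdim0 F x : VCdim_le F 0 -> edge_base F x = set0.
Proof.
move=> hF; apply/eqP; apply: contraT => /set0Pn [S SE].
have : shatters (edge_base F x) set0.
  rewrite /shatters eqEsubset trace_sub_powerset powerset0 sub1set.
  by apply/imsetP; exists S; rewrite ?setI0.
by case/shatters_edge_base => _ /hF; rewrite cardsU1 cards0 inE.
Qed.

Lemma edge_base_notin D F y :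
  F \subset powerset D -> y \notin D -> edge_base F y = set0.
Proof.
move=> FD yD; apply/setP => S; rewrite !inE; apply/negbTE/negP.
case/and3P => _ _ /(subsetP FD); rewrite powersetE => /subsetP /(_ y (setU11 y S)).
exact/negP.
Qed.

Lemma card_deletion_edge_base F x :
  #|[set S :\ x | S in F]| + #|edge_base F x| <= #|F|.
Proof.
set Fo := [set S in F | x \notin S].
set Fi := [set S in F | x \in S].
apply: (@leq_trans (#|Fo| + #|[set S :\ x | S in Fi]|)).
  rewrite -[#|Fo| + _]cardsUI; apply: leq_add; apply: subset_leq_card.
    apply/subsetP => _ /imsetP [S SF ->]; rewrite in_setU.
    case: (boolP (x \in S)) => xS; first by apply/orP; right; apply: imset_f; rewrite inE SF.
    by rewrite setD1_notin // /Fo inE SF xS.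
  apply/subsetP => S; rewrite !inE => /and3P [SF xS xSF].
  by rewrite SF xS; apply/imsetP; exists (x |: S); rewrite ?setU1K // inE xSF setU11.
rewrite -(card_set_pred_split F (fun S => x \in S)) /= -/Fi -/Fo [#|Fi| + _]addnC.
by rewrite leq_add2l leq_imset_card.
Qed.

Lemma card_edge_base_deletion F x y : y != x ->
  #|edge_base F y| <=
  #|edge_base [set S :\ x | S in F] y| + #|edge_base (edge_base F x) y|.
Proof.
move=> yx; set E := edge_base F y.
set U := [set S in E | x \notin S].
set V := [set S :\ x | S in [set S in E | x \in S]].
have cardV : #|V| = #|[set S in E | x \in S]|.
  apply: card_in_imset => S1 S2; rewrite !inE => /andP [_ xS1] /andP [_ xS2] e.
  by rewrite -(setD1K xS1) -(setD1K xS2) e.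
rewrite -(card_set_pred_split E (fun S => x \in S)) -/U -cardV addnC.
rewrite -[#|U| + _]cardsUI; apply: leq_add; apply: subset_leq_card; apply/subsetP => S.
  rewrite in_setU => /orP [|/imsetP [S0]].
    rewrite !inE => /andP [/and3P [SF yS ySF] xS]; rewrite yS.
    apply/andP; split; apply/imsetP.
      by exists S; rewrite ?setD1_notin.
    by exists (y |: S); rewrite ?setD1_notin // !inE negb_or eq_sym yx.
  rewrite !inE => /andP [/and3P [S0F yS0 yS0F] xS0] ->.
  rewrite !inE yx (negbTE yS0) /=; apply/andP; split; apply/imsetP.
    by exists S0.
  by rewrite setU1D1 //; exists (y |: S0).
rewrite in_setI => /andP []; rewrite !inE => /andP [/and3P [SF yS ySF] xS].
case/imsetP => S0; rewrite !inE => /andP [/and3P [S0F yS0 yS0F] xS0] eS.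
have eS0 : S0 = x |: S by rewrite eS setD1K.
rewrite SF xS yS ySF -eS0 S0F /= negb_or xS eq_sym yx /=.
by rewrite setUCA -eS0.
Qed.

Lemma sum_card_edge_base_split F x :
  \sum_y #|edge_base F y| <=
  #|edge_base F x| + \sum_y #|edge_base [set S :\ x | S in F] y|
                   + \sum_y #|edge_base (edge_base F x) y|.
Proof.
rewrite (bigD1 x) //= -addnA leq_add2l -big_split /= [X in _ <= X](bigD1 x) //=.
by apply: leq_trans (leq_addl _ _); apply: leq_sum => y; apply: card_edge_base_deletion.
Qed.

Lemma sum_card_edge_base_le D F d :
  F \subset powerset D -> VCdim_le F d -> \sum_x #|edge_base F x| <= d * #|F|.
Proof.
move: {2}#|D| (erefl #|D|) => n; elim: n D F d => [|n IH] D F d hD FD hF.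
  by rewrite big1 // => y _; rewrite (edge_base_notin FD) ?cards0 // (cards0_eq hD) inE.
case: d hF => [|d] hF.
  by rewrite big1 // => y _; rewrite edge_base_VCdim0 ?cards0.
have [x xD] : exists x, x \in D by apply/card_gt0P; rewrite hD.
have hDx : #|D :\ x| = n by move: hD; rewrite (cardsD1 x) xD => -[].
have deletion_bound :
    \sum_y #|edge_base [set S :\ x | S in F] y| <= d.+1 * #|[set S :\ x | S in F]|.
  apply: IH hDx _ _; last by rewrite deletion_trace; apply: VCdim_le_trace.
  apply/subsetP => _ /imsetP [S SF ->].
  by rewrite powersetE setSD // -powersetE (subsetP FD).
have edge_base_bound :
    \sum_y #|edge_base (edge_base F x) y| <= d * #|edge_base F x|.
  apply: IH hDx _ _; last exact: VCdim_le_edge_base.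
  apply/subsetP => S; rewrite inE => /and3P [SF xS _].
  by rewrite powersetE subsetD1 xS andbT -powersetE (subsetP FD).
have := card_deletion_edge_base F x; have := sum_card_edge_base_split F x.
nia.
Qed.

End Shattering.

Section ClassBound.
Variables (T : finType) (delta : nat) (C : {set {set T}}) (B : {set T}).
Hypothesis C_sep : separated delta C.
Hypothesis C_class : forall S U, S \in C -> U \in C -> S :&: B = U :&: B.

Lemma sum_split_pairs :
  \sum_(x in ~: B) #|[set S in C | x \notin S]| * #|[set S in C | x \in S]| =
  \sum_(S in C) \sum_(U in C) #|S :\: U|.
Proof.
transitivity (\sum_(x in ~: B) \sum_(S in C) \sum_(U in C) ((x \in S) * (x \notin U))).
  apply: eq_bigr => x _; rewrite !card_set_pred_sum mulnC big_distrl /=.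
  by apply: eq_bigr => S _; rewrite big_distrr.
rewrite exchange_big; apply: eq_bigr => S SC; rewrite exchange_big; apply: eq_bigr => U UC /=.
have -> : S :\: U = [set x in ~: B | (x \in S) && (x \notin U)].
  apply/setP => x; rewrite !inE andbC; case: (boolP (x \in B)) => xB //=.
  move/setP: (C_class SC UC) => /(_ x); rewrite !inE xB !andbT => ->.
  by case: (x \in U).
by rewrite card_set_pred_sum; apply: eq_bigr => x _; case: (x \in S); case: (x \in U).
Qed.

Lemma sum_pairs_setD_ge :
  delta * (#|C| * (#|C| - 1)) <= 2 * \sum_(S in C) \sum_(U in C) #|S :\: U|.
Proof.
rewrite mul2n -addnn {2}exchange_big -big_split /=.
have -> : delta * (#|C| * (#|C| - 1)) = \sum_(S in C) ((#|C| - 1) * delta).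
  by rewrite sum_nat_const mulnCA [delta * _]mulnC.
apply: leq_sum => S SC; rewrite -big_split /=.
have -> : (#|C| - 1) * delta = \sum_(U in C) ((S != U) * delta).
  rewrite -big_distrl /= -card_set_pred_sum; congr (_ * _).
  rewrite (cardsD1 S C) SC add1n subn1 /=; apply: eq_card => U; rewrite !inE.
  by rewrite eq_sym andbC.
apply: leq_sum => U UC; case: (eqVneq S U) => [_|SU]; first by rewrite mul0n.
by rewrite mul1n; apply: leq_trans (C_sep SC UC SU) (leq_card_setU _ _).1.
Qed.

Lemma class_bound : delta * (#|C| - 1) <=
  2 * \sum_(x in ~: B) minn #|[set S in C | x \notin S]| #|[set S in C | x \in S]|.
Proof.
case: (posnP #|C|) => [-> | C_gt0]; first by rewrite muln0.
rewrite -(leq_pmul2l C_gt0) mulnCA; apply: leq_trans sum_pairs_setD_ge _.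
rewrite -sum_split_pairs mulnCA leq_mul2l big_distrr /=.
apply: leq_sum => x _; rewrite -(card_set_pred_split C (fun S => x \in S)) /=.
nia.
Qed.

End ClassBound.

Section TraceMultiplicity.
Variables (T : finType) (P : {set {set T}}).
Implicit Types (A B Q : {set T}) (x : T).

Definition trace_mult A Q := #|[set S in P | S :&: A == Q]|.

(* The total weight of the edges of the one-inclusion graph of [trace P A] in
   direction [x], an edge weighing the smaller multiplicity of its ends. *)
Definition edge_weight A x :=
  \sum_(Q : {set T} | x \notin Q) minn (trace_mult A Q) (trace_mult A (x |: Q)).

Lemma trace_mult_le A Q : trace_mult A Q <= #|P|.
Proof. by apply: subset_leq_card; apply/subsetP => S; rewrite inE => /andP []. Qed.

Lemma trace_mult_gt0 A Q : (0 < trace_mult A Q) = (Q \in trace P A).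
Proof.
apply/card_gt0P/imsetP => [[S] | [S SP ->]].
  by rewrite inE => /andP [SP /eqP <-]; exists S.
by exists S; rewrite inE SP eqxx.
Qed.

Lemma sum_trace_mult A : \sum_Q trace_mult A Q = #|P|.
Proof.
rewrite (eq_bigr (fun Q => \sum_(S in P) (S :&: A == Q))); last first.
  by move=> Q _; rewrite -card_set_pred_sum.
rewrite exchange_big /= -sum1_card; apply: eq_bigr => S _.
by rewrite (bigD1 (S :&: A)) //= eqxx big1 // => Q /negbTE; rewrite eq_sym => ->.
Qed.

Lemma sum_trace_mult_trace A : \sum_(Q in trace P A) trace_mult A Q = #|P|.
Proof.
rewrite -(sum_trace_mult A) [RHS](bigID (mem (trace P A))) /= [X in _ = _ + X]big1 ?addn0 //.
by move=> Q; rewrite -trace_mult_gt0 lt0n negbK => /eqP.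
Qed.

Lemma sum_edge_weight_levels A :
  \sum_x edge_weight A x =
  \sum_(t < #|P|) \sum_x #|edge_base [set Q | t < trace_mult A Q] x|.
Proof.
rewrite [RHS]exchange_big; apply: eq_bigr => x _.
rewrite /edge_weight (eq_bigr _ (fun Q _ =>
  minn_sum_ord (trace_mult_le A Q) (trace_mult_le A (x |: Q)))).
rewrite exchange_big; apply: eq_bigr => t _.
rewrite card_set_pred_sum big_mkcond [RHS]big_mkcond; apply: eq_bigr => Q _.
by rewrite !inE; case: (x \in Q); case: (t < _).
Qed.

Lemma sum_card_levels A : \sum_(t < #|P|) #|[set Q | t < trace_mult A Q]| = #|P|.
Proof.
rewrite -[X in _ = X](sum_trace_mult A).
rewrite (eq_bigr (fun t : 'I_#|P| => \sum_Q (t < trace_mult A Q))); last first.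
  by move=> t _; rewrite -sum1dep_card big_mkcond.
rewrite exchange_big; apply: eq_bigr => Q _.
by rewrite sum_ord_ltn; apply/minn_idPr/trace_mult_le.
Qed.

Lemma sum_edge_weight_le A d : VCdim_le P d -> \sum_x edge_weight A x <= d * #|P|.
Proof.
move=> hP; rewrite sum_edge_weight_levels -[X in _ <= _ * X](sum_card_levels A).
rewrite big_distrr; apply: leq_sum => t _; apply: (@sum_card_edge_base_le _ setT).
  by rewrite powersetT subsetT.
apply: (VCdim_le_subset _ (VCdim_le_trace (A := A) hP)); apply/subsetP => Q.
by rewrite inE -trace_mult_gt0; apply: leq_ltn_trans.
Qed.

Lemma trace_mult_setU1 B Q x : x \notin B -> x \notin Q ->
  trace_mult (x |: B) Q = #|[set S in [set S in P | S :&: B == Q] | x \notin S]|.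
Proof.
move=> xB xQ; apply: eq_card => S; rewrite !inE -andbA; congr (_ && _).
case: (boolP (x \in S)) => xS /=.
  by rewrite andbF; apply/negbTE/eqP => e; move: xQ; rewrite -e !inE xS eqxx.
rewrite andbT; congr (_ == _); apply/setP => z; rewrite !inE.
by case: eqP => // ->; rewrite (negbTE xS).
Qed.

Lemma trace_mult_setU1_setU1 B Q x : x \notin B -> x \notin Q ->
  trace_mult (x |: B) (x |: Q) = #|[set S in [set S in P | S :&: B == Q] | x \in S]|.
Proof.
move=> xB xQ; apply: eq_card => S; rewrite !inE -andbA; congr (_ && _).
case: (boolP (x \in S)) => xS /=; last first.
  by rewrite andbF; apply/negbTE/eqP => e; have := setU11 x Q; rewrite -e !inE (negbTE xS).
have -> : S :&: (x |: B) = x |: (S :&: B).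
  by apply/setP => z; rewrite !inE; case: eqP => // ->; rewrite xS.
have xSB : x \notin S :&: B by rewrite inE (negbTE xB) andbF.
rewrite andbT; apply/eqP/eqP => [e|-> //].
by rewrite -(setU1K xSB) e setU1K.
Qed.

Lemma trace_deficit_le delta B : separated delta P ->
  delta * (#|P| - #|trace P B|) <= 2 * \sum_(x in ~: B) edge_weight (x |: B) x.
Proof.
move=> hsep.
have notin_trace x Q : x \notin B -> Q \in trace P B -> x \notin Q.
  by move=> xB /imsetP [S _ ->]; rewrite inE (negbTE xB) andbF.
have class_le Q : Q \in trace P B -> delta * (trace_mult B Q - 1) <=
    2 * \sum_(x in ~: B) minn (trace_mult (x |: B) Q) (trace_mult (x |: B) (x |: Q)).
  move=> QB; set C := [set S in P | S :&: B == Q].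
  rewrite (eq_bigr (fun x => minn #|[set S in C | x \notin S]| #|[set S in C | x \in S]|)).
    apply: class_bound.
      by move=> S U; rewrite /C !inE => /andP [SP _] /andP [UP _]; apply: hsep.
    by move=> S U; rewrite /C !inE => /andP [_ /eqP ->] /andP [_ /eqP ->].
  move=> x; rewrite inE => xB; have xQ := notin_trace _ _ xB QB.
  by rewrite trace_mult_setU1 // trace_mult_setU1_setU1.
rewrite -(sum_trace_mult_trace B) -sum1_card -sumnB; last first.
  by move=> Q; rewrite -trace_mult_gt0.
rewrite big_distrr /=; apply: leq_trans (leq_sum _ class_le) _.
rewrite -big_distrr leq_mul2l exchange_big /=.
apply: leq_sum => x; rewrite inE => xB.
by apply: leq_sum_pred => Q /(notin_trace _ _ xB).
Qed.

End TraceMultiplicity.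

Lemma sum_ksubset_setU1 (T : finType) (F : {set T} -> T -> nat) k :
  \sum_(A : {set T} | #|A| == k) \sum_(x in ~: A) F (x |: A) x =
  \sum_(A : {set T} | #|A| == k.+1) \sum_(x in A) F A x.
Proof.
rewrite !pair_big_dep /=.
rewrite [RHS](reindex_onto (fun p : {set T} * T => (p.2 |: p.1, p.2))
                           (fun p : {set T} * T => (p.1 :\ p.2, p.2))) /=; last first.
  by move=> -[A x] /= /andP [_ xA]; rewrite setD1K.
apply: eq_bigl => -[A x] /=; rewrite in_setC setU11 andbT.
case: (boolP (x \in A)) => xA /=.
  rewrite andbF; apply/esym/negbTE/andP => -[_ /eqP [e]].
  by move: xA; rewrite -e !inE eqxx.
by rewrite andbT setU1K // eqxx andbT cardsU1 xA add1n eqSS.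
Qed.

Lemma sum_ksubset_const (T : finType) k c :
  \sum_(A : {set T} | #|A| == k) c = 'C(#|T|, k) * c.
Proof. by rewrite -card_draws -sum_nat_const; apply: eq_bigl => A; rewrite inE. Qed.

Lemma sum_trace_deficit_le (T : finType) (P : {set {set T}}) d delta k :
  VCdim_le P d -> separated delta P ->
  delta * \sum_(A : {set T} | #|A| == k) (#|P| - #|trace P A|) <=
  2 * (d * #|P|) * 'C(#|T|, k.+1).
Proof.
move=> hVC hsep; rewrite big_distrr /=.
apply: (@leq_trans (2 * \sum_(A : {set T} | #|A| == k)
                        \sum_(x in ~: A) edge_weight P (x |: A) x)).
  by rewrite big_distrr; apply: leq_sum => A _; apply: trace_deficit_le.
rewrite sum_ksubset_setU1 -mulnA leq_mul2l /=.
rewrite mulnC -sum_ksubset_const.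
apply: leq_sum => A _; apply: leq_trans (sum_edge_weight_le A hVC).
exact: leq_sum_pred.
Qed.

Theorem lemma1 (X : finType) (P : {set {set X}}) (d delta s : nat) :
  1 <= d -> 1 <= delta ->
  VCdim_le P d ->
  (forall S T, S \in P -> T \in P -> S != T -> delta <= #|symdiff S T|) ->
  s * delta = 4 * d * #|X| ->
  s <= #|X| ->
  (#|P|%:R <= 2 * @E_uniform_ksubset X s.-1 (fun A => #|trace P A|))%R.
Proof.
move=> d_gt0 _ hVC hsep hs s_le_n.
set n := #|X| in hs s_le_n *; set p := #|P|; set k := s.-1.
set Sig := \sum_(A : {set X} | #|A| == k) #|trace P A|.
set D := \sum_(A : {set X} | #|A| == k) (p - #|trace P A|).
have N_gt0 : 0 < 'C(n, k) by rewrite bin_gt0; lia.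
rewrite /E_uniform_ksubset card_draws -/n -/Sig mulrA ler_pdivlMr ?ltr0n // -!natrM ler_nat.
have SigD : Sig + D = 'C(n, k) * p.
  rewrite -big_split -sum_ksubset_const /=; apply: eq_bigr => A _.
  by rewrite subnKC // leq_imset_card.
case: (posnP n) => [n0 | n_gt0].
  have p_le1 : p <= 1.
    have := card_powerset [set: X]; rewrite powersetT !cardsT -/n n0 expn0 => <-.
    exact: max_card.
  case: (set_0Vmem P) => [P0 | [S SP]]; first by rewrite /p P0 cards0.
  have : 'C(n, k) <= Sig.
    rewrite -[X in X <= _]muln1 -sum_ksubset_const; apply: leq_sum => A _.
    by apply/card_gt0P; exists (S :&: A); apply: imset_f.
  nia.
have sk : s = k.+1 by rewrite /k prednK //; nia.
have deficit : (2 * d * n) * (2 * D) <= (2 * d * n) * (p * 'C(n, k)).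
  have -> : (2 * d * n) * (2 * D) = s * (delta * D) by rewrite [s * _]mulnA hs; ring.
  apply: leq_trans (leq_mul (leqnn s) (sum_trace_deficit_le k hVC hsep)) _.
  have -> : s * (2 * (d * p) * 'C(n, k.+1)) = 2 * d * p * ((n - k) * 'C(n, k)).
    by rewrite -mul_bin_left -sk; ring.
  have -> : 2 * d * n * (p * 'C(n, k)) = 2 * d * p * (n * 'C(n, k)) by ring.
  by rewrite leq_mul2l leq_mul2r leq_subr !orbT.
rewrite leq_pmul2l ?muln_gt0 ?d_gt0 ?n_gt0 // in deficit.
nia.
Qed.
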